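(* Let $m=2^l$ with $l>0$. If $\mathbf{u}\in K(\mathbb{Z}_m^3)$, then $D^2(\mathbf{u})=H(\mathbf{u})$.
   Context: The Ducci function $D:\mathbb{Z}_m^3\to\mathbb{Z}_m^3$ is $D(x_1,x_2,x_3)=(x_1+x_2,\,x_2+x_3,\,x_3+x_1)$, entries mod $m$. $H:\mathbb{Z}_m^3\to\mathbb{Z}_m^3$ is the shift $H(x_1,x_2,x_3)=(x_2,x_3,x_1)$. $K(\mathbb{Z}_m^3)$ is the set of $\mathbf{u}$ lying in the Ducci cycle of some tuple, i.e. with $D^k(\mathbf{u})=\mathbf{u}$ for some $k\ge1$. *)

From mathcomp Require Import all_boot all_algebra.
Set Implicit Arguments. Unset Strict Implicit. Unset Printing Implicit Defensive.
Import GRing.Theory.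
Local Open Scope ring_scope.

Definition tup3 (m : nat) := ('Z_m * 'Z_m * 'Z_m)%type.

Definition ducci (m : nat) (u : tup3 m) : tup3 m :=
  let: (x1, x2, x3) := u in (x1 + x2, x2 + x3, x3 + x1).

Definition shiftH (m : nat) (u : tup3 m) : tup3 m :=
  let: (x1, x2, x3) := u in (x2, x3, x1).

Definition in_K (m : nat) (u : tup3 m) : Prop :=
  exists k : nat, (1 <= k)%N /\ iter k (@ducci m) u = u.

From mathcomp Require Import all_boot all_algebra.
From mathcomp Require Import ring.
Set Implicit Arguments. Unset Strict Implicit. Unset Printing Implicit Defensive.
Import GRing.Theory.
Local Open Scope ring_scope.

(* The coordinate sum s is doubled by each Ducci step, so s(u) = 2^k s(u) on a
   cycle of length k; as 2 is nilpotent in Z_(2^l), this forces s(u) = 0.  And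
   D^2(x1,x2,x3) = (x1 + 2 x2 + x3, ...) = H(x1,x2,x3) + s(u) (1,1,1). *)

Definition tup3_sum (m : nat) (u : tup3 m) : 'Z_m :=
  let: (x1, x2, x3) := u in x1 + x2 + x3.

Lemma tup3_sum_ducci (m : nat) (u : tup3 m) :
  tup3_sum (ducci u) = 2 * tup3_sum u.
Proof. by case: u => [[x1 x2] x3] /=; ring. Qed.

Lemma tup3_sum_iter_ducci (m : nat) (k : nat) (u : tup3 m) :
  tup3_sum (iter k (@ducci m) u) = 2 ^+ k * tup3_sum u.
Proof.
elim: k => [|k IHk]; first by rewrite mul1r.
by rewrite iterS tup3_sum_ducci IHk exprS mulrA.
Qed.

Lemma ducci2_shiftH (m : nat) (u : tup3 m) :
  tup3_sum u = 0 -> iter 2 (@ducci m) u = shiftH u.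
Proof.
case: u => [[x1 x2] x3] /= sum0.
have -> : x3 = - x1 - x2 by rewrite -[x3]subr0 -sum0; ring.
by congr (_, _, _); ring.
Qed.

Lemma eq0_fixed_by_nilpotent (R : pzRingType) (c x : R) (n : nat) :
  c ^+ n = 0 -> x = c * x -> x = 0.
Proof.
move=> cn0 xfix; suff -> : x = c ^+ n * x by rewrite cn0 mul0r.
elim: n {cn0} => [|n IHn]; first by rewrite mul1r.
by rewrite exprSr -mulrA -xfix.
Qed.

Lemma Zp_exp2_eq0 (l : nat) : (0 < l)%N -> (2 : 'Z_(2 ^ l)) ^+ l = 0.
Proof.
move=> l_gt0; rewrite -natrX pchar_Zp //.
by rewrite (leq_exp2l 1) // in l_gt0 *.
Qed.

Theorem lemma4p2 (l : nat) (hl : (0 < l)%N) (u : tup3 (2 ^ l)) :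
  in_K u -> iter 2 (@ducci (2 ^ l)) u = shiftH u.
Proof.
move=> [k [k_gt0 cycle_u]]; apply: ducci2_shiftH.
have nil2k : ((2 : 'Z_(2 ^ l)) ^+ k) ^+ l = 0.
  by rewrite exprAC Zp_exp2_eq0 // expr0n eqn0Ngt k_gt0.
apply: (eq0_fixed_by_nilpotent nil2k).
by rewrite -tup3_sum_iter_ducci cycle_u.
Qed.
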